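(* Let $n,d,k$ be positive integers with $n\ge dk$. Then the value of the single-treasure-per-door search game with parameters $(n,d,k)$ is $$v_1(n,d,k)=\frac{k^d}{\binom nd}.$$
   Context: The single-treasure-per-door search game with parameters $(n,d,k)$ is the following two-player zero-sum game. First the hider places $d$ treasures behind $n$ doors, at most one treasure behind each door. Then the searcher plays rounds: in each round she selects (guesses) a set of at most $k$ doors. If none of the selected doors hides a treasure not yet found, she loses immediately. Otherwise the hider reveals one not-yet-found treasure behind one of the selected doors (the hider chooses which one if there are several). The searcher wins if she finds all $d$ treasures with a total of $d$ guesses (rounds). The searcher's choices may be randomized and may depend on all previous answers; the hider may randomize his hiding and revealing choices. The value $v_1(n,d,k)$ is the probability that the searcher wins when both players play optimally. *)

From mathcomp Require Import all_boot all_order all_algebra.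
Set Implicit Arguments. Unset Strict Implicit. Unset Printing Implicit Defensive.
Import Order.TTheory GRing.Theory Num.Theory.
Local Open Scope ring_scope.

(* A pure searcher strategy: the guess (a set of doors) as a function of the
   sequence of treasures revealed so far (the only information she receives;
   her own past guesses are determined by it). *)
Definition searcher_strategy (n : nat) := seq 'I_n -> {set 'I_n}.

Definition searcher_legal (n k : nat) (s : searcher_strategy n) : Prop :=
  forall h, (#|s h| <= k)%N.

(* A pure hider strategy: a placement S of the treasures together with a
   revealing rule, which may depend on the whole history (past guesses and
   revealed doors) and on the current guess.  If the rule proposes a door that
   is not an admissible answer (a not-yet-found treasure among the selected
   doors), some admissible door is revealed instead; thus the set of induced
   behaviours is exactly the set of legal revealing rules. *)
Definition hider_strategy (n : nat) :=
  ({set 'I_n} * (seq ({set 'I_n} * 'I_n) -> {set 'I_n} -> 'I_n))%type.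

Fixpoint run (n : nat) (s : searcher_strategy n) (S : {set 'I_n})
    (rho : seq ({set 'I_n} * 'I_n) -> {set 'I_n} -> 'I_n)
    (m : nat) (hist : seq ({set 'I_n} * 'I_n)) : bool :=
  match m with
  | 0 => true
  | m'.+1 =>
      let found := map snd hist in
      let G := s found in
      let avail := G :&: (S :\: [set x in found]) in
      if avail == set0 then false
      else
        let r := if rho hist G \in avail then rho hist G
                 else odflt (rho hist G) [pick x in avail] in
        run s S rho m' (rcons hist (G, r))
  end.

(* The searcher wins iff she finds all d treasures with d guesses, i.e. no
   round among the d rounds fails (each successful round reveals a new
   treasure). *)
Definition searcher_wins (n d : nat) (s : searcher_strategy n)
    (h : hider_strategy n) : bool :=
  run s h.1 h.2 d [::].

(* A mixed strategy = finite probability distribution over pure strategies. *)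
Definition is_distr (R : numDomainType) (m : nat) (p : 'I_m -> R) : Prop :=
  (forall i, 0 <= p i) /\ \sum_(i < m) p i = 1.

Definition is_value (R : numDomainType) (n d k : nat) (v : R) : Prop :=
  (exists (m : nat) (p : 'I_m -> R) (sig : 'I_m -> searcher_strategy n),
      is_distr p /\ (forall i, searcher_legal k (sig i)) /\
      forall h : hider_strategy n, #|h.1| = d ->
        v <= \sum_(i < m) p i * (searcher_wins d (sig i) h)%:R)
  /\
  (exists (m : nat) (q : 'I_m -> R) (hs : 'I_m -> hider_strategy n),
      is_distr q /\ (forall j, #|(hs j).1| = d) /\
      forall s : searcher_strategy n, searcher_legal k s ->
        \sum_(j < m) q j * (searcher_wins d s (hs j))%:R <= v).

Arguments is_value : clear implicits.

From mathcomp Require Import all_boot all_order all_algebra fingroup perm zify.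
Import Order.TTheory GRing.Theory Num.Theory.
Set Implicit Arguments. Unset Strict Implicit.

(* Hider: hide the treasures in a uniformly random d-set.  In every round the
   placements on which a legal searcher survives split according to the door
   revealed, which lies in her guess of at most k doors, so she wins on at most
   k^d of the 'C(n, d) placements.
   Searcher: relabel the doors by a uniformly random permutation, cut them into
   blocks of k consecutive doors, and after j finds guess block j; she wins as
   soon as each of the first d blocks holds a treasure.  By symmetry the number
   of good permutations is the same for every d-set, and every permutation is
   good for at least k^d d-sets (one door per block), so double counting gives
   a winning probability of at least k^d / 'C(n, d). *)

Section Run.
Variables (n : nat) (s : searcher_strategy n)
  (rho : seq ({set 'I_n} * 'I_n) -> {set 'I_n} -> 'I_n).

Definition found (hist : seq ({set 'I_n} * 'I_n)) := [set x in map snd hist].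

Definition avail (S : {set 'I_n}) hist :=
  s (map snd hist) :&: (S :\: found hist).

Definition reveal (S : {set 'I_n}) hist :=
  let r := rho hist (s (map snd hist)) in
  if r \in avail S hist then r else odflt r [pick x in avail S hist].

Lemma reveal_avail S hist : avail S hist != set0 -> reveal S hist \in avail S hist.
Proof.
rewrite /reveal; case: ifP => // _.
by case: pickP => [x //|none] /set0Pn [y]; rewrite none.
Qed.

Lemma run_succ S m hist : run s S rho m.+1 hist =
  (avail S hist != set0) &&
  run s S rho m (rcons hist (s (map snd hist), reveal S hist)).
Proof. by rewrite /= /reveal /avail; case: eqP. Qed.

Lemma found_rcons hist G r : found (rcons hist (G, r)) = r |: found hist.
Proof. by apply/setP => x; rewrite !inE map_rcons mem_rcons inE. Qed.

Lemma card_run_placements k : searcher_legal k s -> forall m hist,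
  #|[set S : {set 'I_n} | (found hist \subset S) && (#|S :\: found hist| == m) &&
             run s S rho m hist]| <= k ^ m.
Proof.
move=> legal; elim=> [|m IH] hist.
  rewrite expn0 -(cards1 (found hist)); apply: subset_leq_card.
  apply/subsetP => S; rewrite !inE cards_eq0 setD_eq0 andbT => /andP [FS SF].
  by rewrite eqEsubset SF FS.
set G := s (map snd hist).
rewrite -sum1_card (partition_big (reveal^~ hist) (mem G)); last first.
  move=> S; rewrite inE run_succ => /and3P [_ /reveal_avail + _].
  by rewrite inE => /andP [].
apply: leq_trans (_ : \sum_(r in G) k ^ m <= _); last first.
  by rewrite sum_nat_const expnS leq_mul2r legal orbT.
apply: leq_sum => r _; apply: leq_trans (IH (rcons hist (G, r))).
rewrite sum1_card; apply: subset_leq_card; apply/subsetP => S.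
rewrite unfold_in !inE run_succ found_rcons.
move=> /andP [/and3P [/andP [FS /eqP card_m] av +] /eqP rev].
rewrite rev -/G => -> ; rewrite andbT.
have := reveal_avail av; rewrite rev !inE => /and3P [_ rF rS].
rewrite subUset sub1set rS FS /= setUC -setDDl.
by move: (cardsD1 r (S :\: found hist)); rewrite !inE rF rS card_m add1n => -[<-].
Qed.

End Run.

Lemma card_winning_placements n d k (s : searcher_strategy n) rho :
  searcher_legal k s ->
  #|[set S : {set 'I_n} | (#|S| == d) && searcher_wins d s (S, rho)]| <= k ^ d.
Proof.
move=> legal; apply: leq_trans (card_run_placements rho legal d [::]).
apply: subset_leq_card; apply/subsetP => S; rewrite !inE.
have -> : found [::] = set0 :> {set 'I_n} by apply/setP => x; rewrite !inE.
by rewrite sub0set setD0.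
Qed.

Lemma exists_perm_imset_eq (T : finType) (A B : {set T}) :
  #|A| = #|B| -> exists s : {perm T}, s @: A = B.
Proof.
move: {2}#|A :\: B| (erefl #|A :\: B|) => m; elim: m A => [|m IH] A AB cardAB.
  exists 1%g; rewrite imset_perm1; apply/eqP.
  by rewrite eqEcard -setD_eq0 -cards_eq0 AB cardAB /=.
have cardBA : #|B :\: A| = #|A :\: B|.
  by move: (cardsID A B) (cardsID B A); rewrite setIC; lia.
have /card_gt0P [a] : 0 < #|A :\: B| by rewrite AB.
have /card_gt0P [b] : 0 < #|B :\: A| by rewrite cardBA AB.
rewrite !inE => /andP [bNA bB] /andP [aNB aA].
set t := tperm a b.
have mem_tA x : (x \in t @: A) = (t x \in A).
  by rewrite -{1}(tpermK a b x) mem_imset //; apply: perm_inj.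
have cardtA : #|t @: A| = #|B| by rewrite card_imset //; apply: perm_inj.
have tAB : (t @: A) :\: B = (A :\: B) :\ a.
  apply/setP => x; rewrite !inE mem_tA.
  case: tpermP => [->|->|/eqP xa _]; rewrite ?eqxx ?(negbTE bNA) ?bB ?xa ?andbF //.
have [s tAs] : exists s : {perm T}, s @: (t @: A) = B.
  apply: IH cardtA; rewrite tAB.
  by move: (cardsD1 a (A :\: B)); rewrite !inE aNB aA AB; lia.
exists (t * s)%g; rewrite -tAs -imset_comp; apply: eq_imset => x /=.
by rewrite permM.
Qed.

Section BlockStrategy.
Variables (n d k : nat).
Hypothesis k_gt0 : 0 < k.

(* Block j consists of the doors p i with j * k <= i < (j + 1) * k. *)
Definition block (p : {perm 'I_n}) (x : 'I_n) : nat := (p^-1)%g x %/ k.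

Definition block_strategy (p : {perm 'I_n}) : searcher_strategy n :=
  fun found => [set x | block p x == size found].

Definition covers (p : {perm 'I_n}) (S : {set 'I_n}) :=
  [forall j : 'I_d, [exists x in S, block p x == j]].

Lemma block_strategy_legal p : searcher_legal k (block_strategy p).
Proof.
move=> h; pose slot x : 'I_k := Ordinal (ltn_pmod ((p^-1)%g x) k_gt0).
have slot_inj : {in block_strategy p h &, injective slot}.
  move=> x y; rewrite !inE /block => /eqP xh /eqP yh /(congr1 val) /= xy.
  apply: (@perm_inj _ (p^-1)%g); apply: val_inj.
  by rewrite /= (divn_eq ((p^-1)%g x) k) (divn_eq ((p^-1)%g y) k) xh yh xy.
by rewrite -[k]card_ord; apply: leq_card_in slot_inj.
Qed.

Lemma block_strategy_run p S rho : covers p S -> forall m hist,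
  size hist + m <= d -> (forall x, x \in found hist -> block p x < size hist) ->
  run (block_strategy p) S rho m hist.
Proof.
move=> cover; elim=> [//|m IH] hist hist_m found_lt.
have av : avail (block_strategy p) S hist != set0.
  have lt_d : size hist < d by lia.
  have /existsP [x /andP [xS /eqP xj]] := forallP cover (Ordinal lt_d).
  apply/set0Pn; exists x; rewrite !inE size_map xj eqxx xS andbT /=.
  by apply/negP => x_found; have := found_lt x; rewrite inE xj ltnn => /(_ x_found).
rewrite run_succ av; apply: IH; first by rewrite size_rcons; lia.
move=> x; rewrite found_rcons size_rcons in_setU1 => /predU1P [->|/found_lt]; last by lia.
by have := reveal_avail rho av; rewrite !inE size_map => /and3P [/eqP ->].
Qed.

Lemma block_strategy_wins p S rho :
  covers p S -> searcher_wins d (block_strategy p) (S, rho).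
Proof. by move=> cover; apply: block_strategy_run => // x; rewrite inE. Qed.

Lemma covers_mulg p q (S : {set 'I_n}) : covers (p * q)%g (q @: S) = covers p S.
Proof.
have block_mulg x : block (p * q)%g (q x) = block p x.
  by rewrite /block invMg permM permK.
apply: eq_forallb => j; apply/existsP/existsP => [[_ /andP [/imsetP [x xS ->]]]|[x]].
  by rewrite block_mulg; exists x; rewrite xS.
by move=> /andP [xS xj]; exists (q x); rewrite imset_f // block_mulg.
Qed.

Definition ncovers (S : {set 'I_n}) := #|[set p | covers p S]|.

Lemma ncovers_perm (q : {perm 'I_n}) (S : {set 'I_n}) : ncovers (q @: S) = ncovers S.
Proof.
rewrite /ncovers -(card_rcoset [set p | covers p S] q); apply: eq_card => p.
by rewrite mem_rcoset !inE -[RHS](covers_mulg _ q) mulgKV.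
Qed.

Lemma ncovers_card (S S' : {set 'I_n}) : #|S| = #|S'| -> ncovers S = ncovers S'.
Proof. by case/exists_perm_imset_eq => q <-; rewrite ncovers_perm. Qed.

Hypothesis dk_le_n : d * k <= n.

Lemma slot_subproof (j : 'I_d) (a : 'I_k) : j * k + a < n.
Proof.
apply: leq_trans dk_le_n; apply: leq_trans (_ : j.+1 * k <= _).
  by rewrite mulSnr ltn_add2l.
by rewrite leq_mul2r ltn_ord orbT.
Qed.

Definition slot (j : 'I_d) (a : 'I_k) : 'I_n := Ordinal (slot_subproof j a).

Lemma block_slot p j a : block p (p (slot j a)) = j.
Proof. by rewrite /block permK /= divnMDl // divn_small // addn0. Qed.

Definition block_transversal (p : {perm 'I_n}) (f : {ffun 'I_d -> 'I_k}) :=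
  [set p (slot j (f j)) | j : 'I_d].

Lemma card_block_transversal p f : #|block_transversal p f| = d.
Proof.
rewrite card_imset ?card_ord // => i j /(congr1 (block p)); rewrite !block_slot.
exact: val_inj.
Qed.

Lemma covers_block_transversal p f : covers p (block_transversal p f).
Proof.
apply/forallP => j; apply/existsP; exists (p (slot j (f j))).
by rewrite block_slot eqxx andbT; apply: imset_f.
Qed.

Lemma block_transversal_inj p : injective (block_transversal p).
Proof.
move=> f g fg; apply/ffunP => j.
have : p (slot j (f j)) \in block_transversal p g by rewrite -fg imset_f.
case/imsetP => i _ /[dup] /(congr1 (block p)); rewrite !block_slot => /val_inj <-.
by move/perm_inj/(congr1 val)/addnI/val_inj.
Qed.

Lemma card_covered_sets p :
  k ^ d <= #|[set S : {set 'I_n} | (#|S| == d) && covers p S]|.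
Proof.
rewrite -[k in k ^ _]card_ord -[d in _ ^ d]card_ord -card_ffun.
rewrite -(card_imset _ (@block_transversal_inj p)).
apply: subset_leq_card; apply/subsetP => _ /imsetP [f _ ->].
by rewrite inE card_block_transversal eqxx covers_block_transversal.
Qed.

(* Double counting the pairs (p, S) with [covers p S], using that ncovers is
   constant on d-sets. *)
Lemma card_perm_ncovers (S : {set 'I_n}) :
  #|S| = d -> #|{perm 'I_n}| * k ^ d <= 'C(n, d) * ncovers S.
Proof.
move=> card_S.
have -> : 'C(n, d) * ncovers S = \sum_(S' : {set 'I_n} | #|S'| == d) ncovers S'.
  rewrite -[n in 'C(n, _)]card_ord -card_draws -sum_nat_const.
  apply: eq_big => [S'|S']; rewrite ?inE // => /eqP S'd.
  by apply: ncovers_card; rewrite card_S S'd.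
rewrite /ncovers; under eq_bigr do rewrite -sum1_card.
rewrite (exchange_big_dep predT) //= -sum_nat_const; apply: leq_sum => p _.
apply: leq_trans (card_covered_sets p) _; rewrite -sum1_card.
by apply: eq_leq; apply: eq_bigl => S'; rewrite !inE.
Qed.

End BlockStrategy.

Local Open Scope ring_scope.

Lemma is_distr_uniform (R : numFieldType) m :
  (0 < m)%N -> is_distr (fun _ : 'I_m => m%:R^-1 : R).
Proof.
move=> m_gt0; split=> [_|]; first by rewrite invr_ge0 ler0n.
by rewrite sumr_const card_ord -[_ *+ m]mulr_natr mulVf // pnatr_eq0 -lt0n.
Qed.

Lemma sum_uniform_enum_val {R : numFieldType} (T : finType) (A : {pred T})
    (f : pred T) :
  \sum_(i < #|A|) #|A|%:R^-1 * (f (enum_val i))%:R =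
  #|[set x in A | f x]|%:R / #|A|%:R :> R.
Proof.
rewrite -mulr_sumr mulrC; congr (_ * _).
rewrite -(big_enum_val (A := A) (fun x => (f x)%:R : R)) /= -sum1_card natr_sum.
rewrite big_mkcond [RHS]big_mkcond /=.
by apply: eq_bigr => x _; rewrite !inE; case: (x \in A); case: (f x).
Qed.

Lemma ler_nat_frac (R : numFieldType) (a b c e : nat) :
  (0 < b)%N -> (0 < e)%N -> (e * a <= b * c)%N -> a%:R / b%:R <= c%:R / e%:R :> R.
Proof.
move=> b_gt0 e_gt0 eab; rewrite ler_pdivlMr ?ltr0n // mulrAC ler_pdivrMr ?ltr0n //.
by rewrite -!natrM ler_nat mulnC [(c * b)%N]mulnC.
Qed.

Lemma searcher_guarantee (R : realFieldType) (n d k : nat) :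
  (0 < k)%N -> (d * k <= n)%N ->
  exists (m : nat) (p : 'I_m -> R) (sig : 'I_m -> searcher_strategy n),
    is_distr p /\ (forall i, searcher_legal k (sig i)) /\
    forall h : hider_strategy n, #|h.1| = d ->
      (k ^ d)%:R / ('C(n, d))%:R <= \sum_(i < m) p i * (searcher_wins d (sig i) h)%:R.
Proof.
move=> k_gt0 dk_le_n.
have perm_gt0 : (0 < #|{perm 'I_n}|)%N by apply/card_gt0P; exists 1%g.
exists _, (fun _ => #|{perm 'I_n}|%:R^-1),
  (fun i => block_strategy k (enum_val (A := {perm 'I_n}) i)).
split; first exact: is_distr_uniform.
split=> [i|[S rho] /= card_S]; first exact: block_strategy_legal.
rewrite (sum_uniform_enum_val {perm 'I_n}
  (fun p => searcher_wins d (block_strategy k p) (S, rho))).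
apply: le_trans (_ : (ncovers d k S)%:R / #|{perm 'I_n}|%:R <= _).
  apply: ler_nat_frac => //; last exact: card_perm_ncovers.
  by rewrite bin_gt0; apply: leq_trans dk_le_n; rewrite leq_pmulr.
rewrite ler_wpM2r ?invr_ge0 ?ler0n // ler_nat; apply: subset_leq_card.
by apply/subsetP => p; rewrite !inE; apply: block_strategy_wins.
Qed.

Lemma hider_guarantee (R : realFieldType) (n d k : nat) :
  (0 < n)%N -> (d <= n)%N ->
  exists (m : nat) (q : 'I_m -> R) (hs : 'I_m -> hider_strategy n),
    is_distr q /\ (forall j, #|(hs j).1| = d) /\
    forall s : searcher_strategy n, searcher_legal k s ->
      \sum_(j < m) q j * (searcher_wins d s (hs j))%:R <= (k ^ d)%:R / ('C(n, d))%:R.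
Proof.
move=> n_gt0 d_le_n.
pose D := [set S : {set 'I_n} | #|S| == d].
have card_D : #|D| = 'C(n, d) by rewrite card_draws card_ord.
pose rho (_ : seq ({set 'I_n} * 'I_n)) (_ : {set 'I_n}) := Ordinal n_gt0.
exists _, (fun _ => #|D|%:R^-1), (fun j => (enum_val (A := D) j, rho)).
split; first by apply: is_distr_uniform; rewrite card_D bin_gt0.
split=> [j|s legal]; first by have := enum_valP j; rewrite inE => /eqP.
rewrite (sum_uniform_enum_val D (fun S => searcher_wins d s (S, rho))) card_D.
rewrite ler_wpM2r ?invr_ge0 ?ler0n // ler_nat.
apply: leq_trans (card_winning_placements d rho legal).
by apply/subset_leq_card/subsetP => S; rewrite !inE.
Qed.

Theorem theorem1 (R : realFieldType) (n d k : nat) :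
  (0 < n)%N -> (0 < d)%N -> (0 < k)%N -> (d * k <= n)%N ->
  is_value R n d k ((k ^ d)%:R / ('C(n, d))%:R).
Proof.
move=> n_gt0 _ k_gt0 dk_le_n.
have d_le_n : (d <= n)%N by apply: leq_trans dk_le_n; rewrite leq_pmulr.
by split; [apply: searcher_guarantee | apply: hider_guarantee].
Qed.
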